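(* Consider the delayed online learning protocol of the context, with DDA run with a constant learning rate $\eta_t\equiv\eta$, and fix a comparator $p\in\mathcal X$. Let $\lambda=\max_{1\le t\le T}|\mathcal U_t|$, $\Lambda=\sum_{t=1}^T|\mathcal U_t|$ and $L_T=\sum_{t=1}^T\big(\|g_t\|_*^2+2\|g_t\|_*\sum_{q\in\mathcal U_t}\|g_q\|_*\big)$. Then: (i) if $\|g_t\|_*$ is uniformly bounded and $\eta=\Theta(1/\sqrt{\lambda T})$, then $R_T(p)=O(\sqrt{\lambda T})$; (ii) if $\|g_t\|_*$ is uniformly bounded and $\eta=\Theta(1/\sqrt{\Lambda})$, then $R_T(p)=O(\sqrt{\Lambda})$; (iii) if $\eta=\Theta(1/\sqrt{L_T})$, then $R_T(p)=O(\sqrt{L_T})$.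
   Context: Let $\mathcal V$ be a finite-dimensional real vector space with norm $\|\cdot\|$ and dual norm $\|\cdot\|_*$, and let $\mathcal X\subset\mathcal V$ be closed and convex. A regularizer is a function $h:\mathcal V\to\mathbb R\cup\{+\infty\}$ that is lower semicontinuous, $1$-strongly convex with respect to $\|\cdot\|$ on $\mathcal X$, satisfies $\mathcal X\subset\operatorname{dom}h$, whose subdifferential admits a continuous selection, and which is nonnegative. Protocol: at each round $t=1,\dots,T$ exactly one agent $i(t)$ is active, plays $x_t\in\mathcal X$ and incurs $f_t(x_t)$, where $f_t$ is convex with $\mathcal X\subset\operatorname{dom}\partial f_t$; a subgradient $g_t\in\partial f_t(x_t)$ is revealed later. $\mathcal S^i_t\subset\{1,\dots,t-1\}$ is the set of timestamps $s$ with $g_s$ available to agent $i$ at time $t$, nondecreasing in $t$; $\mathcal S_t=\mathcal S^{i(t)}_t$, $\mathcal U_t=\{1,\dots,t-1\}\setminus\mathcal S_t$. DDA: $x_t=\arg\min_{x\in\mathcal X}\{\sum_{s\in\mathcal S_t}\langle g_s,x\rangle+h(x)/\eta_t\}$. Regret: $R_T(p)=\sum_{t=1}^Tf_t(x_t)-\sum_{t=1}^Tf_t(p)$.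
   Formalization: Part (ii) carries the extra hypothesis T ≤ κΛ, where κ is any constant fixed before the constant in O(√Λ) is chosen, so it covers only the regime T = O(Λ). The statement above fails without it. *)

(* The finite-dimensional real vector space V is modelled as 'rV[R]_n
   (R : realType); its dual V^* is identified with 'rV[R]_n through the
   standard pairing [dotv]. *)
From HB Require Import structures.
From mathcomp Require Import all_boot all_order all_algebra.
From mathcomp Require Import all_classical all_reals all_analysis.
Import Order.TTheory GRing.Theory Num.Theory numFieldNormedType.Exports.

Set Implicit Arguments.
Unset Strict Implicit.
Unset Printing Implicit Defensive.

Local Open Scope classical_set_scope.
Local Open Scope ring_scope.

Section Defs.
Variables (R : realType) (n : nat).
Notation V := 'rV[R]_n.

Definition dotv (g x : V) : R := \sum_(j < n) g ord0 j * x ord0 j.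

Definition is_norm (N : V -> R) : Prop :=
  [/\ forall x, 0 <= N x,
      forall x, N x = 0 -> x = 0,
      forall (a : R) x, N (a *: x) = `|a| * N x
    & forall x y, N (x + y) <= N x + N y].

Definition dual_norm (N : V -> R) (g : V) : R :=
  sup [set dotv g x | x in [set x | N x <= 1]].

Definition convex_set_V (X : set V) : Prop :=
  forall x y (t : R), X x -> X y -> 0 <= t <= 1 -> X (t *: x + (1 - t) *: y).

Definition edom (f : V -> \bar R) : set V := [set x | (f x < +oo)%E].

Definition convex_fun (f : V -> \bar R) : Prop :=
  forall x y (a b t : R), (f x <= a%:E)%E -> (f y <= b%:E)%E -> 0 <= t <= 1 ->
    (f (t *: x + (1 - t) *: y)%R <= (t * a + (1 - t) * b)%:E)%E.

Definition subdiff (f : V -> \bar R) (x : V) : set V :=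
  [set g | f x \is a fin_num /\
           forall y, (f x + (dotv g (y - x)%R)%:E <= f y)%E].

Definition dom_subdiff (f : V -> \bar R) : set V :=
  [set x | subdiff f x !=set0].

Definition strongly_convex_on (N : V -> R) (X : set V) (h : V -> \bar R) :=
  forall x y (t : R), X x -> X y -> 0 <= t <= 1 ->
    (h (t *: x + (1 - t) *: y)%R + (t * (1 - t) / 2 * N (x - y) ^+ 2)%:E
       <= t%:E * h x + (1 - t)%:E * h y)%E.

Definition regularizer (N : V -> R) (X : set V) (h : V -> \bar R) : Prop :=
  [/\ lower_semicontinuous h,
      strongly_convex_on N X h,
      X `<=` edom h,
      (exists s : V -> V, {within dom_subdiff h, continuous s} /\
         forall x, dom_subdiff h x -> subdiff h x (s x))
    & forall x, (0 <= h x)%E].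

(* |U_t| : number of s in {1,..,t-1} whose gradient is not available
   to the active agent i(t) at time t *)
Definition Ucard (I : Type) (i : nat -> I) (S : I -> nat -> pred nat) (t : nat)
  : nat := (\sum_(1 <= s < t | ~~ S (i t) t s) 1)%N.

Definition lam_delay (I : Type) (i : nat -> I) (S : I -> nat -> pred nat)
  (T : nat) : nat := (\max_(1 <= t < T.+1) Ucard i S t)%N.

Definition Lam_delay (I : Type) (i : nat -> I) (S : I -> nat -> pred nat)
  (T : nat) : nat := (\sum_(1 <= t < T.+1) Ucard i S t)%N.

Definition L_T (N : V -> R) (I : Type) (i : nat -> I)
  (S : I -> nat -> pred nat) (g : nat -> V) (T : nat) : R :=
  \sum_(1 <= t < T.+1)
     (dual_norm N (g t) ^+ 2 +
      2 * dual_norm N (g t) *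
        \sum_(1 <= q < t | ~~ S (i t) t q) dual_norm N (g q)).

Definition dda_obj (h : V -> \bar R) (eta : R) (I : Type) (i : nat -> I)
  (S : I -> nat -> pred nat) (g : nat -> V) (t : nat) (y : V) : \bar R :=
  ((\sum_(1 <= s < t | S (i t) t s) dotv (g s) y)%:E + (eta^-1)%:E * h y)%E.

(* The delayed protocol with T rounds, active agents i(t), availability sets
   S^j_t, losses f_t, revealed subgradients g_t, and plays x_t given by DDA
   with constant learning rate eta. *)
Definition delayed_DDA (X : set V) (h : V -> \bar R) (eta : R)
  (I : Type) (T : nat) (i : nat -> I) (S : I -> nat -> pred nat)
  (f : nat -> V -> \bar R) (g : nat -> V) (x : nat -> V) : Prop :=
  [/\ forall (j : I) t s, (1 <= t <= T)%N -> S j t s -> (1 <= s < t)%N,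
      forall (j : I) t t' s, (1 <= t)%N -> (t <= t')%N -> (t' <= T)%N ->
        S j t s -> S j t' s,
      forall t, (1 <= t <= T)%N -> convex_fun (f t) /\ X `<=` dom_subdiff (f t),
      forall t, (1 <= t <= T)%N -> subdiff (f t) (x t) (g t)
    & forall t, (1 <= t <= T)%N ->
        X (x t) /\ forall y, X y ->
          (dda_obj h eta i S g t (x t) <= dda_obj h eta i S g t y)%E].

Definition regret (f : nat -> V -> \bar R) (x : nat -> V) (p : V) (T : nat)
  : \bar R := (\sum_(1 <= t < T.+1) (f t (x t) - f t p))%E.

End Defs.

From HB Require Import structures.
From mathcomp Require Import all_boot all_order all_algebra.
From mathcomp Require Import all_classical all_reals all_analysis.
From mathcomp Require Import ring lra.
Import Order.TTheory GRing.Theory Num.Theory numFieldNormedType.Exports.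
Local Open Scope classical_set_scope.
Local Open Scope ring_scope.

(* Let [Psi th = sup_{y in X} <th, y> - h y / eta] and [th_t = - (g_1 + ... + g_{t-1})].
   Strong convexity of [h] makes the objective fall off quadratically away from any
   near-maximiser, so [Psi] is [eta]-smooth there: one round changes [Psi th_t] by at most
   [- <g_t, y> + eta |g_t|_*^2] with [y] nearly maximising at [th_t].  The iterate [x_t]
   maximises instead at the available part of [th_t]; the gradients [U_t] still in flight
   move the maximiser by at most [2 eta sum_(q in U_t) |g_q|_*], which costs exactly the
   cross term of [L_T].  Telescoping gives [sum_t <g_t, x_t - p> <= h p / eta + eta L_T],
   convexity of the losses bounds the regret by this sum, and the three rates follow by
   bounding [L_T] and substituting [eta]. *)

Lemma mx_norm_entry (R : realDomainType) m k (x : 'M[R]_(m, k)) i j :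
  `|x i j| <= `|x|.
Proof. by rewrite [`|x|]mx_normrE; apply/bigmax_geP; right; exists (i, j). Qed.

Section NormEquivalence.
Context {R : realType} {n : nat} {N : 'rV[R]_n -> R}.
Hypothesis HN : is_norm N.

Lemma isnorm_ge0 x : 0 <= N x. Proof. by case: HN. Qed.

Lemma isnorm_eq0 x : N x = 0 -> x = 0. Proof. by case: HN => _ /(_ x). Qed.

Lemma isnormZ a x : N (a *: x) = `|a| * N x. Proof. by case: HN. Qed.

Lemma isnormD x y : N (x + y) <= N x + N y. Proof. by case: HN. Qed.

Lemma isnorm0 : N 0 = 0.
Proof. by rewrite -(scale0r 0) isnormZ normr0 mul0r. Qed.

Lemma isnormN x : N (- x) = N x.
Proof. by rewrite -scaleN1r isnormZ normrN normr1 mul1r. Qed.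

Lemma isnormB x y : N (x - y) = N (y - x).
Proof. by rewrite -opprB isnormN. Qed.

Lemma isnorm_le_mx_norm : exists2 K, 0 <= K & forall x, N x <= K * `|x|.
Proof.
exists (\sum_(j < n) N (delta_mx 0 j)) => [|x].
  by apply: sumr_ge0 => j _; exact: isnorm_ge0.
rewrite {1}(row_sum_delta x) mulr_suml.
elim/big_ind2: _ => [|a u b v Hu Hv|j _]; first by rewrite isnorm0.
  exact: le_trans (isnormD u v) (lerD Hu Hv).
rewrite isnormZ [_ * `|x|]mulrC; apply: ler_wpM2r; first exact: isnorm_ge0.
exact: mx_norm_entry.
Qed.

Lemma isnorm_distB x y : `|N x - N y| <= N (x - y).
Proof.
have := isnormD (x - y) y; have := isnormD (y - x) x.
by rewrite !subrK (isnormB y x) ler_norml => ? ?; apply/andP; split; lra.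
Qed.

Lemma isnorm_continuous : continuous N.
Proof.
have [K K_ge0 NK] := isnorm_le_mx_norm.
move=> x; apply/(@cvgrPdist_le _ _ _ _ (nbhs_filter x)) => e e_gt0.
have eK_gt0 : 0 < e / (K + 1) by rewrite divr_gt0 // ltr_wpDl.
have : (fun y => y) @ nbhs x --> x by exact: cvg_id.
move=> /cvgrPdist_le /(_ _ eK_gt0); apply: filterS => y xy.
apply: le_trans (isnorm_distB x y) _; apply: le_trans (NK _) _.
apply: le_trans (ler_wpM2l K_ge0 xy) _.
by rewrite mulrA ler_pdivrMr ?ltr_wpDl //; nra.
Qed.

Lemma mx_norm_le_isnorm : exists2 m, 0 < m & forall x, m * `|x| <= N x.
Proof.
pose S := [set v : 'rV[R]_n | `|v| = 1].
have normalize_in_S x : x != 0 -> S (`|x|^-1 *: x).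
  by move=> x0; rewrite /S /= normrZ normrV ?unitfE ?normr_eq0 // normr_id mulVf ?normr_eq0.
have [S0|/set0P S_neq0] := eqVneq S set0.
  exists 1 => // x; have [-> | /normalize_in_S] := eqVneq x 0.
    by rewrite normr0 mulr0 isnorm0.
  by rewrite S0.
have S_compact : compact S.
  apply: bounded_closed_compact; first by exists 1; split => // M /ltW M1 v /= ->.
  apply: (@preimage_closed _ _ (fun v : 'rV[R]_n => `|v|) [set 1]).
    by move=> v _; apply: norm_continuous.
  exact: closed_eq.
have /(EVT_min_rV S_neq0 S_compact) [c] :
    {within S, continuous N} by apply: continuous_subspaceT; exact: isnorm_continuous.
rewrite inE => Sc Nc_min.
exists (N c).
  rewrite lt_def isnorm_ge0 andbT; apply/eqP => /isnorm_eq0 c0.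
  by move: Sc; rewrite /S /= c0 normr0 => /esym/eqP; rewrite oner_eq0.
move=> x; have [-> | x0] := eqVneq x 0; first by rewrite normr0 mulr0 isnorm_ge0.
have := Nc_min _ (mem_set (normalize_in_S x x0)).
rewrite isnormZ normrV ?unitfE ?normr_eq0 // normr_id => Nc_le.
by rewrite -ler_pdivlMr ?normr_gt0 // mulrC.
Qed.

End NormEquivalence.

Section Pairing.
Context {R : realType} {n : nat}.
Implicit Types (g u x y : 'rV[R]_n).

Lemma dotv0l x : dotv 0 x = 0.
Proof. by rewrite /dotv big1 // => j _; rewrite mxE mul0r. Qed.

Lemma dotvDl g u x : dotv (g + u) x = dotv g x + dotv u x.
Proof. by rewrite /dotv -big_split; apply: eq_bigr => j _; rewrite mxE mulrDl. Qed.

Lemma dotvNl g x : dotv (- g) x = - dotv g x.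
Proof. by rewrite /dotv -sumrN; apply: eq_bigr => j _; rewrite mxE mulNr. Qed.

Lemma dotvBl g u x : dotv (g - u) x = dotv g x - dotv u x.
Proof. by rewrite dotvDl dotvNl. Qed.

Lemma dotv_suml (I : Type) (r : seq I) (P : pred I) (F : I -> 'rV[R]_n) x :
  dotv (\sum_(i <- r | P i) F i) x = \sum_(i <- r | P i) dotv (F i) x.
Proof. by elim/big_rec2: _ => [|i a b _ <-]; rewrite ?dotv0l ?dotvDl. Qed.

Lemma dotv0r g : dotv g 0 = 0.
Proof. by rewrite /dotv big1 // => j _; rewrite mxE mulr0. Qed.

Lemma dotvDr g x y : dotv g (x + y) = dotv g x + dotv g y.
Proof. by rewrite /dotv -big_split; apply: eq_bigr => j _; rewrite mxE mulrDr. Qed.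

Lemma dotvZr g a x : dotv g (a *: x) = a * dotv g x.
Proof. by rewrite /dotv mulr_sumr; apply: eq_bigr => j _; rewrite mxE mulrCA. Qed.

Lemma dotvBr g x y : dotv g (x - y) = dotv g x - dotv g y.
Proof. by rewrite dotvDr -scaleN1r dotvZr mulN1r. Qed.

Lemma dotv_le_mx_norm g x : dotv g x <= (\sum_j `|g 0 j|) * `|x|.
Proof.
rewrite /dotv mulr_suml; apply: ler_sum => j _.
rewrite (le_trans (ler_norm _)) // normrM ler_wpM2l //; exact: mx_norm_entry.
Qed.

End Pairing.

Section DualNorm.
Context {R : realType} {n : nat} {N : 'rV[R]_n -> R}.
Hypothesis HN : is_norm N.

Lemma dual_norm_has_sup g : has_sup [set dotv g x | x in [set x | N x <= 1]].
Proof.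
have [m m_gt0 mN] := mx_norm_le_isnorm HN.
split; first by exists 0, 0; rewrite /= ?(isnorm0 HN) ?ler01 ?dotv0r.
exists ((\sum_j `|g 0 j|) / m) => _ [x /= Nx1 <-].
apply: le_trans (dotv_le_mx_norm _ _) _; apply: ler_wpM2l; first exact: sumr_ge0.
by rewrite -[m^-1]mul1r ler_pdivlMr // mulrC (le_trans (mN x)).
Qed.

Lemma dotv_le_dual_norm g x : dotv g x <= dual_norm N g * N x.
Proof.
have [/(isnorm_eq0 HN) -> | Nx_neq0] := eqVneq (N x) 0.
  by rewrite dotv0r (isnorm0 HN) mulr0.
have Nx_gt0 : 0 < N x by rewrite lt_def Nx_neq0 (isnorm_ge0 HN).
rewrite -ler_pdivrMr // mulrC -dotvZr.
apply: sup_upper_bound; first exact: dual_norm_has_sup.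
exists ((N x)^-1 *: x) => //=.
by rewrite (isnormZ HN) ger0_norm ?invr_ge0 ?(isnorm_ge0 HN) // mulVf.
Qed.

Lemma dual_norm_ge0 g : 0 <= dual_norm N g.
Proof.
rewrite -(dotv0r g); apply: sup_upper_bound; first exact: dual_norm_has_sup.
by exists 0; rewrite /= ?(isnorm0 HN) ?ler01.
Qed.

End DualNorm.

Lemma mulr_le_young {R : realFieldType} {eta : R} (a r : R) : 0 < eta ->
  a * r <= eta^-1 * r ^+ 2 / 4 + eta * a ^+ 2.
Proof.
move=> eta_gt0; set ie := eta^-1; have eta_ie : eta * ie = 1 by rewrite mulfV ?gt_eqF.
have : 0 <= eta * (ie * r - 2 * a) ^+ 2 by rewrite mulr_ge0 ?sqr_ge0 ?ltW.
have -> : eta * (ie * r - 2 * a) ^+ 2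
    = (eta * ie) * ie * r ^+ 2 - 4 * (eta * ie) * (a * r) + 4 * eta * a ^+ 2 by ring.
by rewrite eta_ie; lra.
Qed.

(* The first condition forces [r <= 2 eta b + o(1)] as [e] tends to [0]. *)
Lemma le_of_quadratic_slack {R : realFieldType} (A B a b eta : R) :
  0 < eta -> 0 <= a -> 0 <= b ->
  (forall e, 0 < e -> exists2 r, r ^+ 2 <= eta * (2 * b * r + 4 * e)
                                  & A <= B + a * r + 2 * e) ->
  A <= B + 2 * eta * a * b.
Proof.
move=> eta_gt0 a_ge0 b_ge0 slack; apply/ler_addgt0Pr => e e_gt0.
pose d := e / (2 * (a + 1)).
have d_gt0 : 0 < d by rewrite divr_gt0 // mulr_gt0 // ltr_wpDl.
have ad_le : a * d <= e / 2.
  rewrite /d mulrA ler_pdivrMr ?mulr_gt0 ?ltr_wpDl //; nra.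
pose e' := Num.min (e / 4) (d ^+ 2 / (4 * eta)).
have e'_gt0 : 0 < e'.
  rewrite lt_min; apply/andP; split; apply: divr_gt0 => //;
  by [rewrite exprn_gt0 | rewrite mulr_gt0].
have e'_le : e' <= e / 4 by rewrite ge_min lexx.
have eta_e'_le : 4 * eta * e' <= d ^+ 2.
  have : e' <= d ^+ 2 / (4 * eta) by rewrite ge_min lexx orbT.
  by rewrite ler_pdivlMr ?mulr_gt0 // [e' * _]mulrC.
have [r r_sq A_le] := slack e' e'_gt0.
have eta_b : 0 <= 2 * eta * b by nra.
have r_le : r <= 2 * eta * b + d.
  rewrite leNgt; apply/negP => r_gt.
  have : 0 < (r - d) * (r - 2 * eta * b) by rewrite mulr_gt0 //; lra.
  have : 0 < d * (r - 2 * eta * b - d) by rewrite mulr_gt0 //; lra.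
  nra.
have := ler_wpM2l a_ge0 r_le; nra.
Qed.

Lemma regret_le_linearized {R : realType} {n} {f : nat -> 'rV[R]_n -> \bar R}
    {g x : nat -> 'rV[R]_n} {p T} :
  (forall t, (1 <= t <= T)%N -> subdiff (f t) (x t) (g t) /\ f t p \is a fin_num) ->
  (regret f x p T <= (\sum_(1 <= t < T.+1) dotv (g t) (x t - p))%:E)%E.
Proof.
move=> sub; rewrite /regret -sumEFin big_nat_cond [X in (_ <= X)%E]big_nat_cond.
apply: lee_sum => t /andP[/andP[t_ge1 t_le] _].
have [[fx_fin fx_sub] fp_fin] := sub t (introT andP (conj t_ge1 t_le)).
have := fx_sub p; rewrite -(fineK fx_fin) -(fineK fp_fin) -EFinD -EFinB !lee_fin.
rewrite !dotvBr; lra.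
Qed.

Section DualAveraging.
Context {R : realType} {n : nat} {N : 'rV[R]_n -> R} {X : set 'rV[R]_n}
  {h : 'rV[R]_n -> \bar R} {eta : R}.
Hypotheses (HN : is_norm N) (X_convex : convex_set_V X) (X_neq0 : X !=set0)
  (h_sc : strongly_convex_on N X h) (h_fin : forall y, X y -> h y \is a fin_num)
  (h_ge0 : forall y, (0 <= h y)%E) (eta_gt0 : 0 < eta).

(* [dual_obj th] is the negated DDA objective and [hconj] the conjugate of
   [h / eta] restricted to [X]. *)
Definition dual_obj (th y : 'rV[R]_n) := dotv th y - eta^-1 * fine (h y).

Definition hconj th := sup [set dual_obj th y | y in X].

Definition near_max th e y :=
  X y /\ forall z, X z -> dual_obj th z <= dual_obj th y + e.

Let eta_inv_gt0 : 0 < eta^-1. Proof. by rewrite invr_gt0. Qed.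

Let half_in01 : 0 <= (1 / 2 : R) <= 1.
Proof. by apply/andP; split; lra. Qed.

Lemma dual_objBl th u y : dual_obj (th - u) y = dual_obj th y - dotv u y.
Proof. by rewrite /dual_obj dotvBl addrAC. Qed.

Lemma dual_obj_mid th {x y} : X x -> X y ->
  (dual_obj th x + dual_obj th y) / 2 + eta^-1 * N (x - y) ^+ 2 / 8
    <= dual_obj th ((1 / 2) *: x + (1 - 1 / 2) *: y).
Proof.
move=> Xx Xy; have := h_sc _ _ _ Xx Xy half_in01.
rewrite -(fineK (h_fin _ (X_convex _ _ _ Xx Xy half_in01))).
rewrite -(fineK (h_fin _ Xx)) -(fineK (h_fin _ Xy)) -!EFinM -!EFinD lee_fin.
move=> /(ler_wpM2l (ltW eta_inv_gt0)).
rewrite /dual_obj dotvDr !dotvZr; lra.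
Qed.

Lemma near_max_growth {th e y z} : near_max th e y -> X z ->
  dual_obj th z + eta^-1 * N (z - y) ^+ 2 / 4 <= dual_obj th y + 2 * e.
Proof.
move=> [Xy y_max] Xz; have := dual_obj_mid th Xz Xy.
have := y_max _ (X_convex _ _ _ Xz Xy half_in01); lra.
Qed.

Lemma near_max_smooth {th e y} d {z} : near_max th e y -> X z ->
  dual_obj (th - d) z
    <= dual_obj th y + 2 * e - dotv d y + eta * dual_norm N d ^+ 2.
Proof.
move=> y_max Xz; have := near_max_growth y_max Xz.
have := dotv_le_dual_norm HN d (y - z); rewrite dotvBr (isnormB HN).
have := mulr_le_young (dual_norm N d) (N (z - y)) eta_gt0.
rewrite dual_objBl; lra.
Qed.

Lemma dual_obj0_le0 y : dual_obj 0 y <= 0.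
Proof.
rewrite /dual_obj dotv0l sub0r oppr_le0.
by rewrite mulr_ge0 ?(ltW eta_inv_gt0) ?fine_ge0.
Qed.

Lemma near_max0 {x} : X x -> near_max 0 (eta^-1 * fine (h x)) x.
Proof.
split => // z _; apply: le_trans (dual_obj0_le0 z) _.
by rewrite /dual_obj dotv0l sub0r addNr.
Qed.

Lemma hconj_has_sup th : has_sup [set dual_obj th y | y in X].
Proof.
have [x Xx] := X_neq0; split; first by exists (dual_obj th x), x.
exists (dual_obj 0 x + 2 * (eta^-1 * fine (h x)) - dotv (- th) x
        + eta * dual_norm N (- th) ^+ 2).
move=> _ [y Xy <-]; have := near_max_smooth (- th) (near_max0 Xx) Xy.
by rewrite sub0r opprK.
Qed.

Lemma dual_obj_le_hconj th {y} : X y -> dual_obj th y <= hconj th.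
Proof. by move=> Xy; apply: sup_upper_bound; [exact: hconj_has_sup | exists y]. Qed.

Lemma hconj_le th B : (forall y, X y -> dual_obj th y <= B) -> hconj th <= B.
Proof.
move=> le_B; apply: ge_sup; first by have [y Xy] := X_neq0; exists (dual_obj th y), y.
by move=> _ [y Xy <-]; exact: le_B.
Qed.

Lemma near_max_exists th {e} : 0 < e -> exists y, near_max th e y.
Proof.
move=> e_gt0; have [_ [y Xy <-] lt_y] := sup_adherent e_gt0 (hconj_has_sup th).
exists y; split => // z Xz; apply: le_trans (dual_obj_le_hconj th Xz) _.
by rewrite -lerBlDr ltW.
Qed.

Lemma near_max_dist {th u b e x y} : near_max th 0 x -> near_max (th - u) e y ->
  (forall z, dotv u z <= b * N z) ->
  N (y - x) ^+ 2 <= eta * (2 * b * N (y - x) + 4 * e).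
Proof.
move=> x_max y_max u_le.
have := near_max_growth x_max y_max.1; have := near_max_growth y_max x_max.1.
have := u_le (x - y); rewrite !dual_objBl dotvBr (isnormB HN x y) => u_xy gy gx.
rewrite -ler_pdivrMl //; lra.
Qed.

Lemma hconj_delayed_step th u g x b : near_max th 0 x -> 0 <= b ->
  (forall z, dotv u z <= b * N z) ->
  hconj (th - u - g) <= hconj (th - u) - dotv g x
    + eta * (dual_norm N g ^+ 2 + 2 * dual_norm N g * b).
Proof.
move=> x_max b_ge0 u_le.
(* Apply smoothness at a near-maximiser [y] for [th - u]; it lies within
   [2 eta b] of [x], so replacing [<g, y>] by [<g, x>] costs [2 eta |g|_* b]. *)
rewrite mulrDr addrA (_ : eta * (2 * _ * b) = 2 * eta * dual_norm N g * b); last by ring.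
apply: le_of_quadratic_slack => //; first exact: dual_norm_ge0.
move=> e e_gt0; have [y y_max] := near_max_exists (th - u) e_gt0.
exists (N (y - x)); first exact: near_max_dist x_max y_max u_le.
apply: hconj_le => z Xz.
have := near_max_smooth g y_max Xz; have := dual_obj_le_hconj (th - u) y_max.1.
have := dotv_le_dual_norm HN g (x - y); rewrite dotvBr (isnormB HN x y); lra.
Qed.

Lemma dda_near_max {I : Type} {T} {i : nat -> I} {S f g x t} :
  delayed_DDA X h eta T i S f g x -> (1 <= t <= T)%N ->
  near_max (- \sum_(1 <= s < t | S (i t) t s) g s) 0 (x t).
Proof.
case=> _ _ _ _ dda_opt t_in; have [Xxt xt_min] := dda_opt t t_in.
split => // y Xy; have := xt_min y Xy.
rewrite /dda_obj -(fineK (h_fin _ Xy)) -(fineK (h_fin _ Xxt)) -!EFinM -!EFinD lee_fin.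
rewrite /dual_obj !dotvNl !dotv_suml; lra.
Qed.

Lemma dda_hconj_step {I : Type} {T} {i : nat -> I} {S f g x t} :
  delayed_DDA X h eta T i S f g x -> (1 <= t <= T)%N ->
  hconj (- \sum_(1 <= s < t.+1) g s)
    <= hconj (- \sum_(1 <= s < t) g s) - dotv (g t) (x t)
       + eta * (dual_norm N (g t) ^+ 2 + 2 * dual_norm N (g t)
                * \sum_(1 <= q < t | ~~ S (i t) t q) dual_norm N (g q)).
Proof.
move=> dda /[dup] t_in /andP[t_ge1 _].
rewrite big_nat_recr //= (bigID (S (i t) t)) /= !opprD.
apply: hconj_delayed_step; first exact: dda_near_max dda t_in.
  by apply: sumr_ge0 => q _; exact: dual_norm_ge0.
move=> z; rewrite dotv_suml mulr_suml; apply: ler_sum => q _.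
exact: dotv_le_dual_norm.
Qed.

Lemma dda_linearized_regret {I : Type} {T} {i : nat -> I} {S f g x p} :
  delayed_DDA X h eta T i S f g x -> X p ->
  \sum_(1 <= t < T.+1) dotv (g t) (x t - p)
    <= eta^-1 * fine (h p) + eta * L_T N i S g T.
Proof.
move=> dda Xp; pose Phi t := hconj (- \sum_(1 <= s < t) g s).
have telescoped : \sum_(1 <= t < T.+1) dotv (g t) (x t)
    <= Phi 1%N - Phi T.+1 + eta * L_T N i S g T.
  have -> : Phi 1%N - Phi T.+1 = \sum_(1 <= t < T.+1) (Phi t - Phi t.+1).
    by rewrite -opprB -telescope_sumr // -sumrN; apply: eq_bigr => t _; rewrite opprB.
  rewrite /L_T mulr_sumr -big_split /=; apply: ler_sum_nat => t t_in.
  have := dda_hconj_step dda t_in; rewrite /Phi; lra.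
have Phi1_le0 : Phi 1%N <= 0.
  by apply: hconj_le => y _; rewrite big_geq // oppr0 dual_obj0_le0.
have := dual_obj_le_hconj (- \sum_(1 <= s < T.+1) g s) Xp.
rewrite /dual_obj dotvNl dotv_suml -/(Phi T.+1) => p_le.
rewrite (eq_bigr _ (fun t _ => dotvBr (g t) (x t) p)) sumrB; lra.
Qed.

Lemma dda_regret_le {I : Type} {T} {i : nat -> I} {S f g x p} :
  delayed_DDA X h eta T i S f g x -> X p ->
  (regret f x p T <= (eta^-1 * fine (h p) + eta * L_T N i S g T)%:E)%E.
Proof.
move=> dda Xp; apply: le_trans (regret_le_linearized _) _.
  move=> t t_in; case: dda => _ _ f_dom g_sub _; split; first exact: g_sub.
  by have [_ /(_ p Xp) [g' [fp_fin _]]] := f_dom t t_in.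
by rewrite lee_fin (dda_linearized_regret dda Xp).
Qed.

End DualAveraging.

Lemma learning_rate_tradeoff {R : realType} (H K L Q c1 c2 eta : R) :
  0 <= H -> 0 <= K -> 0 < Q -> 0 < c1 -> 0 < eta -> L <= K * Q ->
  c1 / Num.sqrt Q <= eta <= c2 / Num.sqrt Q ->
  eta^-1 * H + eta * L <= (H / c1 + c2 * K) * Num.sqrt Q.
Proof.
move=> H_ge0 K_ge0 Q_gt0 c1_gt0 eta_gt0 LK /andP[lo hi].
have s_gt0 : 0 < Num.sqrt Q by rewrite sqrtr_gt0.
rewrite ler_pdivrMr // in lo; rewrite ler_pdivlMr // in hi.
rewrite -(sqr_sqrtr (ltW Q_gt0)) in LK; set s := Num.sqrt Q in s_gt0 lo hi LK *.
have inv_le : eta^-1 <= s / c1 by rewrite ler_pdivlMr // ler_pdivrMl.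
have := ler_wpM2r H_ge0 inv_le; have := ler_wpM2l (ltW eta_gt0) LK.
have : 0 <= (c2 - eta * s) * (K * s) by rewrite mulr_ge0 ?subr_ge0 // mulr_ge0 // ltW.
nra.
Qed.

Lemma dda_regret_le_sqrt {R : realType} {n} {N : 'rV[R]_n -> R} {X h p} :
  is_norm N -> convex_set_V X -> strongly_convex_on N X h ->
  (forall y, X y -> h y \is a fin_num) -> (forall y, (0 <= h y)%E) -> X p ->
  forall (I : Type) T (i : nat -> I) S f g x eta (K Q c1 c2 : R),
  delayed_DDA X h eta T i S f g x ->
  0 < Q -> 0 <= K -> L_T N i S g T <= K * Q -> 0 < c1 ->
  c1 / Num.sqrt Q <= eta <= c2 / Num.sqrt Q ->
  (regret f x p T <= ((fine (h p) / c1 + c2 * K) * Num.sqrt Q)%:E)%E.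
Proof.
move=> HN X_convex h_sc h_fin h_ge0 Xp I T i S f g x eta K Q c1 c2 dda
  Q_gt0 K_ge0 LK c1_gt0 eta_in.
have eta_gt0 : 0 < eta.
  by case/andP: eta_in => + _; apply: lt_le_trans; rewrite divr_gt0 ?sqrtr_gt0.
have := dda_regret_le HN X_convex (ex_intro _ p Xp) h_sc h_fin h_ge0 eta_gt0 dda Xp.
move=> /le_trans; apply.
by rewrite lee_fin learning_rate_tradeoff ?fine_ge0.
Qed.

Lemma L_T_le_bounded {R : realType} {n} {N : 'rV[R]_n -> R} {I : Type} {i : nat -> I}
    {S} {g : nat -> 'rV[R]_n} {T} {G : R} :
  is_norm N -> (forall t, (1 <= t <= T)%N -> dual_norm N (g t) <= G) ->
  L_T N i S g T <= G ^+ 2 * (T%:R + 2 * (Lam_delay i S T)%:R).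
Proof.
move=> HN g_le.
apply: (@le_trans _ _ (\sum_(1 <= t < T.+1) (G ^+ 2 + 2 * G ^+ 2 * (Ucard i S t)%:R))).
  apply: ler_sum_nat => t /andP[t_ge1 t_le].
  have a_le : dual_norm N (g t) <= G by apply: g_le; rewrite t_ge1.
  have a_ge0 := dual_norm_ge0 HN (g t).
  set b := \sum_(1 <= q < t | _) _.
  have b_le : b <= G * (Ucard i S t)%:R.
    rewrite /b /Ucard natr_sum mulr_sumr big_nat_cond [leRHS]big_nat_cond.
    apply: ler_sum => q /andP[/andP[q_ge1 q_lt] _]; rewrite mulr1; apply: g_le.
    by rewrite q_ge1 (leq_trans (ltnW q_lt)).
  have b_ge0 : 0 <= b by apply: sumr_ge0 => q _; exact: dual_norm_ge0.
  nra.
rewrite big_split /= sumr_const_nat subn1 -mulr_natr -mulr_sumr /Lam_delay natr_sum.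
lra.
Qed.

Lemma Lam_delay_le (I : Type) (i : nat -> I) S T :
  (Lam_delay i S T <= lam_delay i S T * T)%N.
Proof.
have -> : (lam_delay i S T * T = \sum_(1 <= t < T.+1) lam_delay i S T)%N.
  by rewrite sum_nat_const_nat subn1 mulnC.
rewrite /Lam_delay big_nat_cond [leqRHS]big_nat_cond; apply: leq_sum => t /andP[t_in _].
by rewrite /lam_delay leq_bigmax_seq // mem_index_iota.
Qed.

Theorem corollary1 (R : realType) (n : nat) (N : 'rV[R]_n -> R)
  (X : set 'rV[R]_n) (h : 'rV[R]_n -> \bar R) (p : 'rV[R]_n) :
  is_norm N -> closed X -> convex_set_V X -> regularizer N X h -> X p ->
  (* (i) bounded gradients, eta = Theta(1/sqrt(lambda T)) *)
  (forall G c1 c2 : R, 0 < c1 ->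
   exists C : R, forall (I : Type) (T : nat) (i : nat -> I)
     (S : I -> nat -> pred nat) (f : nat -> 'rV[R]_n -> \bar R)
     (g x : nat -> 'rV[R]_n) (eta : R),
     delayed_DDA X h eta T i S f g x ->
     (forall t, (1 <= t <= T)%N -> dual_norm N (g t) <= G) ->
     (0 < lam_delay i S T)%N ->
     c1 / Num.sqrt ((lam_delay i S T)%:R * T%:R) <= eta <=
       c2 / Num.sqrt ((lam_delay i S T)%:R * T%:R) ->
     (regret f x p T <= (C * Num.sqrt ((lam_delay i S T)%:R * T%:R))%:E)%E)
  /\
  (* (ii) bounded gradients, eta = Theta(1/sqrt(Lambda)), in the regime T = O(Lambda) *)
  (forall G c1 c2 kappa : R, 0 < c1 ->
   exists C : R, forall (I : Type) (T : nat) (i : nat -> I)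
     (S : I -> nat -> pred nat) (f : nat -> 'rV[R]_n -> \bar R)
     (g x : nat -> 'rV[R]_n) (eta : R),
     delayed_DDA X h eta T i S f g x ->
     (forall t, (1 <= t <= T)%N -> dual_norm N (g t) <= G) ->
     (0 < Lam_delay i S T)%N ->
     T%:R <= kappa * (Lam_delay i S T)%:R ->
     c1 / Num.sqrt (Lam_delay i S T)%:R <= eta <=
       c2 / Num.sqrt (Lam_delay i S T)%:R ->
     (regret f x p T <= (C * Num.sqrt (Lam_delay i S T)%:R)%:E)%E)
  /\
  (* (iii) eta = Theta(1/sqrt(L_T)) *)
  (forall c1 c2 : R, 0 < c1 ->
   exists C : R, forall (I : Type) (T : nat) (i : nat -> I)
     (S : I -> nat -> pred nat) (f : nat -> 'rV[R]_n -> \bar R)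
     (g x : nat -> 'rV[R]_n) (eta : R),
     delayed_DDA X h eta T i S f g x ->
     0 < L_T N i S g T ->
     c1 / Num.sqrt (L_T N i S g T) <= eta <= c2 / Num.sqrt (L_T N i S g T) ->
     (regret f x p T <= (C * Num.sqrt (L_T N i S g T))%:E)%E).
Proof.
move=> HN _ X_convex [_ h_sc h_dom _ h_ge0] Xp.
have h_fin y : X y -> h y \is a fin_num by move=> /h_dom; rewrite ge0_fin_numE.
have regret_sqrt := dda_regret_le_sqrt HN X_convex h_sc h_fin h_ge0 Xp.
split; [|split].
- move=> G c1 c2 c1_gt0; exists (fine (h p) / c1 + c2 * (3 * G ^+ 2)).
  move=> I T i S f g x eta dda g_le lam_gt0 eta_in.
  have T_gt0 : (0 < T)%N.
    by rewrite lt0n; apply: contraTneq lam_gt0 => ->; rewrite /lam_delay big_geq.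
  apply: regret_sqrt dda _ _ _ c1_gt0 eta_in; first by rewrite mulr_gt0 ?ltr0n.
    by rewrite mulr_ge0 ?sqr_ge0.
  apply: le_trans (L_T_le_bounded HN g_le) _.
  have : (Lam_delay i S T)%:R <= (lam_delay i S T)%:R * T%:R :> R.
    by rewrite -natrM ler_nat Lam_delay_le.
  have : T%:R <= (lam_delay i S T)%:R * T%:R :> R by rewrite -natrM ler_nat leq_pmull.
  have := sqr_ge0 G; nra.
- move=> G c1 c2 kappa c1_gt0; exists (fine (h p) / c1 + c2 * (G ^+ 2 * (`|kappa| + 2))).
  move=> I T i S f g x eta dda g_le Lam_gt0 T_le eta_in.
  apply: regret_sqrt dda _ _ _ c1_gt0 eta_in; first by rewrite ltr0n.
    by rewrite mulr_ge0 ?sqr_ge0 ?addr_ge0.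
  apply: le_trans (L_T_le_bounded HN g_le) _.
  have : kappa * (Lam_delay i S T)%:R <= `|kappa| * (Lam_delay i S T)%:R.
    by rewrite ler_wpM2r ?ler_norm.
  have := sqr_ge0 G; nra.
- move=> c1 c2 c1_gt0; exists (fine (h p) / c1 + c2 * 1).
  move=> I T i S f g x eta dda L_gt0 eta_in.
  by apply: regret_sqrt dda _ _ _ c1_gt0 eta_in; rewrite ?mul1r.
Qed.
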